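(* Let $p$ be prime, $n\ge1$, and let $f$, $\lambda$, $e_j$, $f_k$ be as in the context. Let $M:V_2(GF(p^n))\to V_{2n}(\mathbb{Z}_p)$ be the $\mathbb{Z}_p$-linear map sending $e_j$ to the vector with a $1$ in position $2j$ and zeros elsewhere, and $f_j$ to the vector with a $1$ in position $2j+1$ and zeros elsewhere (positions indexed from $0$). Then $M$ is a $\mathbb{Z}_p$-linear isomorphism and for all $u_1,u_2\in V_2(GF(p^n))$, $$M(u_1)\circ M(u_2)=\operatorname{Tr}(u_1\circ u_2).$$ Consequently the images $M(C_\alpha)$, $\alpha\in GF(p^n)$, and $M(C_\infty)$ are $p^n+1$ subspaces of $V_{2n}(\mathbb{Z}_p)$, each of size $p^n$, pairwise intersecting only in $0$, within each of which all symplectic products vanish; hence for each such subspace the tensor products $S_{x_0,y_0}\otimes S_{x_1,y_1}\otimes\cdots\otimes S_{x_{n-1},y_{n-1}}$, $(x_0,y_0,\dots,x_{n-1},y_{n-1})$ in the subspace, pairwise commute.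
   Context: $f(x)=c_0+\cdots+c_{n-1}x^{n-1}+x^n$ is irreducible over $\mathbb{Z}_p$ with $n$ distinct roots $\lambda_1,\dots,\lambda_n$ in $GF(p^n)$, $\lambda$ one of them; elements of $GF(p^n)$ are $\alpha(\lambda)=\sum_{i<n}a_i\lambda^i$, $a_i\in\mathbb{Z}_p$, and $\operatorname{Tr}(\alpha)=\sum_{r=1}^n\alpha(\lambda_r)$. $d_j(\lambda)$ are defined by $f(x)/(x-\lambda)=\sum_{j=0}^{n-1}d_j(\lambda)x^j$; $e_j=d_j(\lambda)f'(\lambda)^{-1}(1,0)$ and $f_k=\lambda^k(0,1)$ in $V_2(GF(p^n))=GF(p^n)^2$. Symplectic product on $V_2(GF(p^n))$: $(\alpha,\beta)\circ(\alpha',\beta')=\beta\alpha'-\alpha\beta'$. On $V_{2n}(\mathbb{Z}_p)$, writing $w=(x_0,y_0,\dots,x_{n-1},y_{n-1})$: $w\circ w'=\sum_{i=0}^{n-1}(y_ix_i'-x_iy_i')\bmod p$. $C_\alpha=\{\beta(1,\alpha):\beta\in GF(p^n)\}$, $C_\infty=\{\beta(0,1):\beta\in GF(p^n)\}$. $S_{x,y}=\sum_{m=0}^{p-1}\eta^{mx}|m\rangle\langle m+y|$ on $\mathbb{C}^p$, $\eta=\exp(2\pi i/p)$; two tensor products $\bigotimes_iS_{x_i,y_i}$ and $\bigotimes_iS_{x_i',y_i'}$ commute iff $w\circ w'=0$. *)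

From HB Require Import structures.
From mathcomp Require Import all_boot all_order all_algebra all_field.
From mathcomp Require Import mxtens zify.
Set Implicit Arguments. Unset Strict Implicit. Unset Printing Implicit Defensive.
Import Order.TTheory GRing.Theory Num.Theory.
Local Open Scope ring_scope.

(* Embedding of Z_p = 'F_p into a field L (of characteristic p). *)
Definition fp2L (p : nat) (L : fieldType) (a : 'F_p) : L := (nat_of_ord a)%:R.

Definition fL (p : nat) (L : fieldType) (f : {poly 'F_p}) : {poly L} :=
  map_poly (@fp2L p L) f.

(* Z_p-scalar multiplication on V_2(GF(p^n)) = L * L *)
Definition scl (p : nat) (L : fieldType) (a : 'F_p) (u : L * L) : L * L :=
  (fp2L L a * u.1, fp2L L a * u.2).

Definition sympL (L : fieldType) (u v : L * L) : L := u.2 * v.1 - u.1 * v.2.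

Lemma xpos_proof (n : nat) (i : 'I_n) : (2 * i < 2 * n)%N.
Proof. by rewrite ltn_pmul2l. Qed.
Lemma ypos_proof (n : nat) (i : 'I_n) : (2 * i + 1 < 2 * n)%N.
Proof. have := ltn_ord i; lia. Qed.
Definition xpos (n : nat) (i : 'I_n) : 'I_(2 * n) := Ordinal (xpos_proof i).
Definition ypos (n : nat) (i : 'I_n) : 'I_(2 * n) := Ordinal (ypos_proof i).

(* symplectic product on V_{2n}(Z_p), w = (x_0,y_0,...,x_{n-1},y_{n-1}) *)
Definition sympV (p n : nat) (w w' : 'rV['F_p]_(2 * n)) : 'F_p :=
  \sum_(i < n) (w 0 (ypos i) * w' 0 (xpos i) - w 0 (xpos i) * w' 0 (ypos i)).

(* coordinates of alpha in the basis 1, lam, ..., lam^(n-1) (unique when it exists) *)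
Definition coords (p n : nat) (L : fieldType) (lam alpha : L) :
  option {ffun 'I_n -> 'F_p} :=
  [pick a : {ffun 'I_n -> 'F_p} |
     alpha == \sum_(i < n) fp2L L (a i) * lam ^+ i].

(* Tr(alpha) = sum over the roots lam_r of f of alpha(lam_r) *)
Definition Tr (p n : nat) (L : finFieldType) (f : {poly 'F_p}) (lam alpha : L) : L :=
  match coords p n lam alpha with
  | Some a => \sum_(r : L | root (fL L f) r) \sum_(i < n) fp2L L (a i) * r ^+ i
  | None => 0
  end.

Definition dcoef (p : nat) (L : fieldType) (f : {poly 'F_p}) (lam : L) (j : nat) : L :=
  ((fL L f) %/ ('X - lam%:P))`_j.

Definition ebas (p : nat) (L : fieldType) (f : {poly 'F_p}) (lam : L) (j : nat) : L * L :=
  (dcoef f lam j * ((fL L f)^`()).[lam]^-1, 0).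
Definition fbas (L : fieldType) (lam : L) (k : nat) : L * L := (0, lam ^+ k).

(* C_alpha (Some alpha) and C_infinity (None) *)
Definition Cset (L : finFieldType) (o : option L) : {set L * L} :=
  match o with
  | Some a => [set (b, b * a) | b : L]
  | None => [set (0, b) | b : L]
  end.

Definition isM (p n : nat) (L : finFieldType) (f : {poly 'F_p}) (lam : L)
  (M : L * L -> 'rV['F_p]_(2 * n)) : Prop :=
  [/\ forall (a : 'F_p) (u v : L * L), M (scl a u + v) = a *: M u + M v,
      forall j : 'I_n, M (ebas f lam j) = delta_mx 0 (xpos j) &
      forall j : 'I_n, M (fbas lam j) = delta_mx 0 (ypos j)].

(* eta = exp(2 pi i / p) in algC: p.-root (-1) is exp(i pi / p) (principal root) *)
Definition eta (p : nat) : algC := (p.-root (-1)) ^+ 2.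

Definition Smat (p : nat) (x y : 'F_p) : 'M[algC]_p :=
  \matrix_(i < p, j < p)
     (if (nat_of_ord j == (i + y) %% p)%N then eta p ^+ (i * x) else 0).

Fixpoint tensn (p k : nat) : ('I_k -> 'M[algC]_p) -> 'M[algC]_(p ^ k) :=
  match k with
  | 0 => fun _ => castmx (esym (expn0 p), esym (expn0 p)) 1%:M
  | k'.+1 => fun g =>
      castmx (esym (expnS p k'), esym (expnS p k'))
        (tensmx (g ord0) (@tensn p k' (fun i => g (lift ord0 i))))
  end.

Definition tensS (p n : nat) (w : 'rV['F_p]_(2 * n)) : 'M[algC]_(p ^ n) :=
  tensn (fun i : 'I_n => Smat (w 0 (xpos i)) (w 0 (ypos i))).

(* The vectors e_j = d_j(lam)/f'(lam) form the basis of GF(p^n) over Z_p that is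
   trace-dual to 1, lam, ..., lam^(n-1): Lagrange interpolation of x^k at the roots of
   f gives Euler's formula sum_r r^k d_j(r)/f'(r) = [j = k], i.e.
   Tr(lam^k e_j) = [j = k]. So M reads off the coordinates of alpha in the dual basis
   and those of beta in the power basis; it is bijective, and Tr(beta alpha') is the
   dot product of the corresponding coordinate vectors, which is the symplectic
   identity. The lines C_alpha, C_infinity are isotropic for the symplectic form on
   GF(p^n)^2 and meet pairwise in 0, hence so are their images, and the Weyl relation
   S_w S_w' = eta^(w o w') S_w' S_w turns isotropy into commutation. *)

From Pilot Require Import Defs.
From HB Require Import structures.
From mathcomp Require Import all_boot all_order all_algebra all_field.
From mathcomp Require Import mxtens zify ring.
Set Implicit Arguments. Unset Strict Implicit. Unset Printing Implicit Defensive.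
Import GRing.Theory Num.Theory.
Local Open Scope ring_scope.

Lemma castmx_mulmx (R : pzRingType) m m' (e : m = m') (A B : 'M[R]_m) :
  castmx (e, e) A *m castmx (e, e) B = castmx (e, e) (A *m B).
Proof. by case: m' / e. Qed.

Lemma castmxZ (R : pzRingType) m1 n1 m2 n2 (e : (m1 = m2) * (n1 = n2)) c
    (A : 'M[R]_(m1, n1)) :
  castmx e (c *: A) = c *: castmx e A.
Proof. by case: e => em en; case: m2 / em; case: n2 / en. Qed.

Lemma tensmxZ (R : comPzRingType) m n p q (c d : R) (A : 'M[R]_(m, n))
    (B : 'M[R]_(p, q)) :
  tensmx (c *: A) (d *: B) = (c * d) *: tensmx A B.
Proof. by apply/matrixP => i j; rewrite !mxE mulrACA. Qed.

Lemma tensn_mul_twist p k (g h : 'I_k -> 'M[algC]_p) (c : 'I_k -> algC) :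
  (forall i, g i *m h i = c i *: (h i *m g i)) ->
  tensn g *m tensn h = (\prod_i c i) *: (tensn h *m tensn g).
Proof.
elim: k g h c => [|k IHk] g h c ghc; first by rewrite big_ord0 scale1r.
rewrite /= !castmx_mulmx !tensmx_mul ghc (IHk _ _ (c \o lift ord0)) => [|i].
  by rewrite tensmxZ castmxZ big_ord_recl.
exact: ghc.
Qed.

Lemma natr_Fp p (a : 'F_p) : (a : nat)%:R = a.
Proof. exact: natr_Zp. Qed.

Section WeylOperators.
Variable p : nat.
Hypothesis p_pr : prime p.

Lemma eta_expp : Defs.eta p ^+ p = 1.
Proof.
by rewrite /Defs.eta -exprM mulnC exprM rootCK ?prime_gt0 // expr2 mulN1r opprK.
Qed.

Lemma eta_expn_mod m : Defs.eta p ^+ (m %% p) = Defs.eta p ^+ m.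
Proof. by rewrite {2}(divn_eq m p) exprD mulnC exprM eta_expp expr1n mul1r. Qed.

Definition phase (a : 'F_p) : algC := Defs.eta p ^+ a.

Lemma phase_natr m : phase m%:R = Defs.eta p ^+ m.
Proof. by rewrite /phase val_Fp_nat // eta_expn_mod. Qed.

Lemma phaseD : {morph phase : a b / a + b >-> a * b}.
Proof.
by move=> a b; rewrite -[a]natr_Fp -[b]natr_Fp -natrD !phase_natr exprD.
Qed.

Lemma phase0 : phase 0 = 1.
Proof. by rewrite /phase expr0. Qed.

Lemma Smat_mulE (a b a' b' : 'F_p) (i k : 'I_p) :
  (Smat a b *m Smat a' b') i k =
  if k == ((i + b + b') %% p)%N :> nat
  then Defs.eta p ^+ (i * a + (i + b) %% p * a')%N else 0.
Proof.
have ib_lt : ((i + b) %% p < p)%N by rewrite ltn_mod prime_gt0.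
rewrite !mxE (bigD1 (Ordinal ib_lt)) //= big1 => [|j /negbTE j_ib]; last first.
  by rewrite !mxE -val_eqE /= in j_ib *; rewrite j_ib mul0r.
rewrite !mxE /= eqxx addr0 modnDml; case: ifP => _; last by rewrite mulr0.
by rewrite -exprD.
Qed.

Lemma Smat_mul_twist (x y x' y' : 'F_p) :
  Smat x y *m Smat x' y' = phase (y * x' - x * y') *: (Smat x' y' *m Smat x y).
Proof.
apply/matrixP => i k; rewrite [in RHS]mxE !Smat_mulE addnAC.
case: ifP => _; last by rewrite mulr0.
rewrite -!phase_natr -phaseD; congr phase.
by rewrite !natrD !natrM !(Fp_nat_mod p_pr) !natrD !natr_Fp; ring.
Qed.

Lemma tensS_mul_twist n (w w' : 'rV['F_p]_(2 * n)) :
  tensS w *m tensS w' = phase (sympV w w') *: (tensS w' *m tensS w).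
Proof.
rewrite /tensS (tensn_mul_twist (fun i => Smat_mul_twist _ _ _ _)).
by rewrite -(big_morph phase phaseD phase0).
Qed.

Lemma tensS_commute n (w w' : 'rV['F_p]_(2 * n)) :
  sympV w w' = 0 -> tensS w *m tensS w' = tensS w' *m tensS w.
Proof. by move=> w_w'; rewrite tensS_mul_twist w_w' phase0 scale1r. Qed.

End WeylOperators.

Section PrimeFieldEmbedding.
Variables (p : nat) (L : fieldType).
Hypotheses (p_pr : prime p) (pcharL : p \in [pchar L]).

Lemma fp2L_natr m : fp2L L (m%:R : 'F_p) = m%:R.
Proof. by rewrite /fp2L val_Fp_nat // (GRing.natr_mod_pchar pcharL). Qed.

Lemma fp2L_is_zmod_morphism : zmod_morphism (@fp2L p L).
Proof.
have fp2LD (a b : 'F_p) : fp2L L (a + b) = fp2L L a + fp2L L b.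
  by rewrite -[a]natr_Fp -[b]natr_Fp -natrD !fp2L_natr natrD.
by move=> a b; apply: (addIr (fp2L L b)); rewrite -fp2LD !subrK.
Qed.

Lemma fp2L_is_monoid_morphism : monoid_morphism (@fp2L p L).
Proof.
split=> [|a b]; first by rewrite -[1]/(1%:R) fp2L_natr.
by rewrite -[a]natr_Fp -[b]natr_Fp -natrM !fp2L_natr natrM.
Qed.

End PrimeFieldEmbedding.

Section DivisionByLinearFactor.
Variable R : fieldType.
Implicit Types (q : {poly R}) (r : R).

Lemma divp_XsubC_expand q r :
  q %/ ('X - r%:P) = \sum_(i < size q) q`_i *: \sum_(m < i) r ^+ m *: 'X^(i.-1 - m).
Proof.
apply: (@mulIf _ ('X - r%:P)); first by rewrite polyXsubC_eq0.
have -> : q %/ ('X - r%:P) * ('X - r%:P) = q - q.[r]%:P.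
  by rewrite {2}(divp_eq q ('X - r%:P)) modp_XsubC addrK.
rewrite {1}horner_coef -{1}[q]coefK poly_def rmorph_sum -sumrB mulr_suml.
apply: eq_bigr => i _; rewrite -scalerAl rmorphM /= mul_polyC -scalerBr.
congr (_ *: _); rewrite rmorphXn subrXX mulrC; congr (_ * _).
by apply: eq_bigr => m _; rewrite -rmorphXn mulrC mul_polyC.
Qed.

Lemma coef_divp_XsubC q r j :
  (q %/ ('X - r%:P))`_j = \sum_(i < size q | (j < i)%N) q`_i * r ^+ (i.-1 - j).
Proof.
rewrite divp_XsubC_expand coef_sum [RHS]big_mkcond; apply: eq_bigr => -[i i_lt] _ /=.
rewrite coefZ coef_sum; case: (ltnP j i) => [j_lt_i | i_le_j].
  have k_lt_i : (i.-1 - j < i)%N by lia.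
  rewrite (bigD1 (Ordinal k_lt_i)) //= coefZ coefXn subKn; last first.
    by rewrite -ltnS (ltn_predK j_lt_i).
  rewrite eqxx mulr1 big1 ?addr0 // => m /eqP m_k.
  rewrite coefZ coefXn; case: eqP => [j_m|]; last by rewrite mulr0.
  by case: m_k; apply: val_inj => /=; have := ltn_ord m; lia.
rewrite big1 ?mulr0 // => -[m m_lt_i] _; rewrite coefZ coefXn /=.
by case: eqP => [j_m|]; [exfalso; lia | rewrite mulr0].
Qed.

End DivisionByLinearFactor.

Section LagrangeInterpolation.
Variables (R : fieldType) (s : seq R).
Hypothesis s_uniq : uniq s.
Local Notation P := (\prod_(r <- s) ('X - r%:P)).

Lemma divp_prod_XsubC r :
  r \in s -> P %/ ('X - r%:P) = \prod_(t <- rem r s) ('X - t%:P).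
Proof.
by move=> rs; rewrite (perm_big _ (perm_to_rem rs)) big_cons mulKp ?polyXsubC_eq0.
Qed.

Lemma size_divp_prod_XsubC r : r \in s -> size (P %/ ('X - r%:P)) = size s.
Proof.
move=> rs; rewrite divp_prod_XsubC // size_prod_XsubC size_rem // prednK //.
by rewrite -has_predT; apply/hasP; exists r.
Qed.

Lemma horner_divp_prod_XsubC r t :
  r \in s -> t \in s -> t != r -> (P %/ ('X - r%:P)).[t] = 0.
Proof.
move=> rs ts t_r; apply/eqP; rewrite divp_prod_XsubC // -/(root _ t).
by rewrite root_prod_XsubC mem_rem_uniq // inE t_r.
Qed.

Lemma deriv_prod_XsubC_root r :
  r \in s -> P^`().[r] = (P %/ ('X - r%:P)).[r].
Proof.
move=> rs; have r_dvd : 'X - r%:P %| P by rewrite dvdp_XsubCl root_prod_XsubC.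
rewrite -{1}(divpK r_dvd) derivM derivXsubC mulr1 hornerD hornerM hornerXsubC.
by rewrite subrr mulr0 add0r.
Qed.

Lemma deriv_prod_XsubC_neq0 r : r \in s -> P^`().[r] != 0.
Proof.
move=> rs; rewrite deriv_prod_XsubC_root // divp_prod_XsubC // -/(root _ r).
by rewrite root_prod_XsubC mem_rem_uniqF.
Qed.

Lemma lagrange_interpolation (g : {poly R}) : (size g <= size s)%N ->
  \sum_(r <- s) (g.[r] / P^`().[r]) *: (P %/ ('X - r%:P)) = g.
Proof.
move=> size_g; apply/eqP; rewrite -subr_eq0; apply/eqP.
apply: (roots_geq_poly_eq0 (rs := s)) => //.
  apply/allP => t ts; rewrite /root hornerD hornerN horner_sum (bigD1_seq t) //=.
  rewrite [X in _ + X - _]big_seq_cond [X in _ + X - _]big1 => [|r /andP[rs r_t]];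
    last first.
    by rewrite hornerZ horner_divp_prod_XsubC 1?eq_sym ?mulr0.
  rewrite hornerZ -deriv_prod_XsubC_root // mulfVK ?deriv_prod_XsubC_neq0 //.
  by rewrite addr0 subrr.
rewrite (leq_trans (size_polyD _ _)) // geq_max size_polyN size_g andbT.
rewrite big_seq; apply: (big_ind (fun q : {poly R} => size q <= size s)%N).
- by rewrite size_poly0.
- by move=> q q' sq sq'; rewrite (leq_trans (size_polyD _ _)) // geq_max sq sq'.
- by move=> r rs; rewrite (leq_trans (size_scale_leq _ _)) ?size_divp_prod_XsubC.
Qed.

End LagrangeInterpolation.

Lemma xpos_inj n : injective (@xpos n).
Proof. by move=> i j /(congr1 val) /= ij; apply: ord_inj; lia. Qed.

Lemma ypos_inj n : injective (@ypos n).
Proof. by move=> i j /(congr1 val) /= ij; apply: ord_inj; lia. Qed.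

Lemma xpos_neq_ypos n (i j : 'I_n) : xpos i != ypos j.
Proof. by rewrite -val_eqE /=; apply/eqP; lia. Qed.

Lemma isM_map0 p n (L : finFieldType) (f : {poly 'F_p}) (lam : L)
    (M : L * L -> 'rV['F_p]_(2 * n)) :
  isM f lam M -> M 0 = 0.
Proof.
case=> M_lin _ _; have := M_lin 1 0 0; rewrite /scl /= !mulr0 addr0 scale1r.
by move/esym; rewrite -[X in _ = X]add0r => /addIr.
Qed.

Section SymplecticModel.
Variables (p n : nat) (L : finFieldType) (f : {poly 'F_p}) (lam : L) (s : seq L).
Hypotheses (p_pr : prime p) (pcharL : p \in [pchar L]) (cardL : #|L| = (p ^ n)%N).
Hypotheses (size_f : size f = n.+1) (f_irr : irreducible_poly f).
Hypotheses (s_uniq : uniq s) (size_s : size s = n).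
Hypotheses (fL_roots : fL L f = \prod_(r <- s) ('X - r%:P)) (f_lam : root (fL L f) lam).

Local Notation phi := (@fp2L p L).
Local Notation Tr := (Tr n f lam).
Local Notation fd r := ((fL L f)^`()).[r].
Implicit Type M : L * L -> 'rV['F_p]_(2 * n).

HB.instance Definition _ :=
  GRing.isZmodMorphism.Build _ _ phi (fp2L_is_zmod_morphism p_pr pcharL).
HB.instance Definition _ :=
  GRing.isMonoidMorphism.Build _ _ phi (fp2L_is_monoid_morphism p_pr pcharL).

Lemma root_fL_f r : root (fL L f) r = (r \in s).
Proof. by rewrite fL_roots root_prod_XsubC. Qed.

Lemma dvdp_root_lam (g : {poly 'F_p}) : root (fL L g) lam -> f %| g.
Proof.
move=> g_lam; have [gcd1 | gcd_f] := irredp_XsubCP f_irr (dvdp_gcdl f g).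
  have /coprimep_root/(_ f_lam) : coprimep (fL L f) (fL L g).
    by rewrite coprimep_map coprimep_def size_poly_eq1.
  by rewrite -/(root _ _) g_lam.
by rewrite -(eqp_dvdl _ gcd_f) dvdp_gcdr.
Qed.

Lemma root_fL_dvdp (q : {poly 'F_p}) r : f %| q -> r \in s -> root (fL L q) r.
Proof.
case/dvdpP=> q' ->; rewrite -root_fL_f /root /fL rmorphM hornerM => /eqP ->.
by rewrite mulr0.
Qed.

Lemma horner_fL_conj (g h : {poly 'F_p}) r : r \in s ->
  (fL L g).[lam] = (fL L h).[lam] -> (fL L g).[r] = (fL L h).[r].
Proof.
move=> rs gh_lam; have /root_fL_dvdp/(_ rs) : f %| g - h.
  by apply: dvdp_root_lam; rewrite /root /fL rmorphB hornerD hornerN gh_lam subrr.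
by rewrite /root /fL rmorphB hornerD hornerN subr_eq0 => /eqP.
Qed.

Definition comb (b : 'I_n -> L) (a : {ffun 'I_n -> 'F_p}) : L :=
  \sum_i phi (a i) * b i.

Definition coord (b : 'I_n -> L) (x : L) : {ffun 'I_n -> 'F_p} :=
  odflt [ffun => 0] [pick a | comb b a == x].

Lemma comb_lin b c (a a' : {ffun 'I_n -> 'F_p}) :
  comb b [ffun j => c * a j + a' j] = phi c * comb b a + comb b a'.
Proof.
rewrite /comb mulr_sumr -big_split /=; apply: eq_bigr => j _.
by rewrite ffunE rmorphD rmorphM mulrDl mulrA.
Qed.

Section Basis.
Variable b : 'I_n -> L.
Hypothesis comb_inj : injective (comb b).

Lemma comb_bij : bijective (comb b).
Proof.
by apply: inj_card_bij => //; rewrite card_ffun !card_ord cardL Fp_cast.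
Qed.

Lemma coordK : cancel (coord b) (comb b).
Proof.
move=> x; rewrite /coord; case: pickP => [a /eqP // | none].
by have [g _ gK] := comb_bij; have := none (g x); rewrite gK eqxx.
Qed.

Lemma coord_lin c x y :
  coord b (phi c * x + y) = [ffun j => c * coord b x j + coord b y j].
Proof. by apply: comb_inj; rewrite comb_lin !coordK. Qed.

Lemma coord_basis j : coord b (b j) = [ffun i => (i == j)%:R].
Proof.
apply: comb_inj; rewrite coordK /comb (bigD1 j) //= ffunE eqxx rmorph1 mul1r.
by rewrite big1 ?addr0 // => i /negbTE ij; rewrite ffunE ij rmorph0 mul0r.
Qed.

Lemma coord0 : coord b 0 = [ffun => 0].
Proof.
by apply: comb_inj; rewrite coordK /comb big1 // => i _; rewrite ffunE rmorph0 mul0r.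
Qed.

End Basis.

Definition powers (r : L) (i : 'I_n) : L := r ^+ i.

Definition poly_of_coord (a : {ffun 'I_n -> 'F_p}) : {poly 'F_p} :=
  \sum_i a i *: 'X^i.

Lemma comb_powers r a : comb (powers r) a = (fL L (poly_of_coord a)).[r].
Proof.
rewrite /fL /poly_of_coord rmorph_sum horner_sum; apply: eq_bigr => i _.
by rewrite /= map_polyZ map_polyXn hornerZ hornerXn.
Qed.

Lemma size_poly_of_coord a : (size (poly_of_coord a) <= n)%N.
Proof.
rewrite /poly_of_coord; apply: (big_ind (fun q : {poly 'F_p} => size q <= n)%N).
- by rewrite size_poly0.
- by move=> q q' sq sq'; rewrite (leq_trans (size_polyD _ _)) // geq_max sq sq'.
- by move=> i _; rewrite (leq_trans (size_scale_leq _ _)) // size_polyXn.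
Qed.

Lemma coef_poly_of_coord a (i : 'I_n) : (poly_of_coord a)`_i = a i.
Proof.
rewrite /poly_of_coord coef_sum (bigD1 i) //= coefZ coefXn eqxx mulr1 big1 ?addr0 //.
by move=> j /negbTE ji; rewrite coefZ coefXn (inj_eq val_inj) eq_sym ji mulr0.
Qed.

(* [1, lam, ..., lam^(n-1)] is free since [f] is the minimal polynomial of [lam]. *)
Lemma comb_powers_inj : injective (comb (powers lam)).
Proof.
move=> a a' aa'; set q := poly_of_coord a - poly_of_coord a'.
have f_q : f %| q.
  by apply: dvdp_root_lam; rewrite /root /q /fL rmorphB hornerD hornerN
    -!/(fL L _) -!comb_powers aa' subrr.
have size_q : (size q < size f)%N.
  by rewrite size_f ltnS (leq_trans (size_polyD _ _)) // geq_max size_polyN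
    !size_poly_of_coord.
have q0 : q = 0 by apply: contraTeq size_q => q_neq0; rewrite -leqNgt dvdp_leq.
apply/ffunP => i; apply/eqP; rewrite -subr_eq0 -!coef_poly_of_coord -coefB.
by rewrite -/q q0 coef0.
Qed.

Lemma exists_fL_horner x : exists g : {poly 'F_p}, x = (fL L g).[lam].
Proof.
by exists (poly_of_coord (coord (powers lam) x));
  rewrite -comb_powers (coordK comb_powers_inj).
Qed.

Lemma Tr_fL_horner (g : {poly 'F_p}) :
  Tr (fL L g).[lam] = \sum_(r <- s) (fL L g).[r].
Proof.
rewrite /Defs.Tr /coords; case: pickP => [a /eqP g_a | no_coord]; last first.
  have := no_coord (coord (powers lam) (fL L g).[lam]).
  by rewrite -[X in _ == X]/(comb (powers lam) _) (coordK comb_powers_inj) eqxx.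
rewrite (big_uniq _ s_uniq) /=; apply: eq_big => r; first by rewrite root_fL_f.
rewrite root_fL_f => rs; rewrite -[LHS]/(comb (powers r) a) comb_powers.
by apply: horner_fL_conj; rewrite // -comb_powers g_a.
Qed.

Lemma Tr_lin c x y : Tr (phi c * x + y) = phi c * Tr x + Tr y.
Proof.
have [g ->] := exists_fL_horner x; have [h ->] := exists_fL_horner y.
have fL_lin r : (fL L (c *: g + h)).[r] = phi c * (fL L g).[r] + (fL L h).[r].
  by rewrite /fL rmorphD /= map_polyZ hornerD hornerZ.
rewrite -fL_lin !Tr_fL_horner mulr_sumr -big_split /=.
by apply: eq_bigr => r _; exact: fL_lin.
Qed.

Lemma Tr0 : Tr 0 = 0.
Proof.
have := Tr_fL_horner 0; rewrite /fL rmorph0 horner0 => ->.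
by rewrite big1 // => r _; rewrite horner0.
Qed.

Lemma TrD x y : Tr (x + y) = Tr x + Tr y.
Proof. by have := Tr_lin 1 x y; rewrite rmorph1 !mul1r. Qed.

Lemma TrZ c x : Tr (phi c * x) = phi c * Tr x.
Proof. by have := Tr_lin c x 0; rewrite !addr0 Tr0 addr0. Qed.

Lemma TrN x : Tr (- x) = - Tr x.
Proof. by have := TrZ (-1) x; rewrite rmorphN1 !mulN1r. Qed.

Lemma Tr_comb b a : Tr (comb b a) = \sum_i phi (a i) * Tr (b i).
Proof. by rewrite /comb (big_morph Tr TrD Tr0); apply: eq_bigr => i _; rewrite TrZ. Qed.

Definition dpoly (j : nat) : {poly 'F_p} :=
  \sum_(i < size f | (j < i)%N) f`_i *: 'X^(i.-1 - j).

Lemma dcoef_fL_horner j r : dcoef f r j = (fL L (dpoly j)).[r].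
Proof.
rewrite /dcoef coef_divp_XsubC size_map_poly /dpoly /fL rmorph_sum horner_sum.
by apply: eq_bigr => i _ /=; rewrite coef_map map_polyZ map_polyXn hornerZ hornerXn.
Qed.

Lemma fd_neq0 r : r \in s -> fd r != 0.
Proof. by rewrite fL_roots; exact: deriv_prod_XsubC_neq0. Qed.

Lemma exists_inv_deriv :
  exists H : {poly 'F_p}, forall r, r \in s -> (fL L H).[r] = (fd r)^-1.
Proof.
have lam_s : lam \in s by rewrite -root_fL_f.
have [H H_lam] := exists_fL_horner (fd lam)^-1; exists H => r rs.
have root_Hf r' : root (fL L (H * f^`() - 1)) r' = ((fL L H).[r'] * fd r' == 1).
  rewrite /root /fL rmorphB rmorphM rmorph1 /= -deriv_map hornerD hornerN.
  by rewrite hornerM hornerC subr_eq0.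
apply: (mulIf (fd_neq0 rs)); rewrite mulVf ?fd_neq0 //; apply/eqP; rewrite -root_Hf.
apply: root_fL_dvdp rs; apply: dvdp_root_lam.
by rewrite root_Hf -H_lam mulVf ?fd_neq0.
Qed.

Definition dbasis (j : 'I_n) : L := dcoef f lam j / fd lam.

(* Euler's formula: Lagrange interpolation of ['X^k] at the roots of [f]. *)
Lemma Tr_powers_dbasis (j k : 'I_n) : Tr (lam ^+ k * dbasis j) = (j == k)%:R.
Proof.
have [H H_inv] := exists_inv_deriv; have lam_s : lam \in s by rewrite -root_fL_f.
have q_r r : r \in s ->
    (fL L ('X^k * dpoly j * H)).[r] = r ^+ k * dcoef f r j / fd r.
  move=> rs; rewrite /fL !rmorphM /= map_polyXn !hornerM hornerXn.
  by rewrite -/(fL L (dpoly j)) -dcoef_fL_horner -/(fL L H) H_inv.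
rewrite /dbasis mulrA -q_r // Tr_fL_horner.
have := lagrange_interpolation s_uniq (g := 'X^k).
rewrite size_polyXn size_s -fL_roots => /(_ (ltn_ord k)) /(congr1 (coefp j)) /=.
rewrite coefXn coef_sum -val_eqE /= => <-; apply: eq_big_seq => r rs.
by rewrite q_r // coefZ hornerXn mulrAC.
Qed.

Lemma Tr_powers_comb_dbasis (k : 'I_n) a : Tr (lam ^+ k * comb dbasis a) = phi (a k).
Proof.
rewrite /comb mulr_sumr (eq_bigr (fun j => phi (a j) * (lam ^+ k * dbasis j)));
  last by move=> j _; rewrite mulrCA.
rewrite -[X in Tr X]/(comb (fun j => lam ^+ k * dbasis j) a) Tr_comb.
rewrite (bigD1 k) //= Tr_powers_dbasis eqxx mulr1 big1 ?addr0 // => j /negbTE jk.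
by rewrite Tr_powers_dbasis jk mulr0.
Qed.

Lemma comb_dbasis_inj : injective (comb dbasis).
Proof.
move=> a a' aa'; apply/ffunP => k; apply: (fmorph_inj phi) => /=.
by rewrite -!Tr_powers_comb_dbasis aa'.
Qed.

Lemma Tr_comb_powers_dbasis b a :
  Tr (comb (powers lam) b * comb dbasis a) = \sum_i phi (b i) * phi (a i).
Proof.
rewrite [X in Tr X]mulr_suml.
rewrite (eq_bigr (fun k => phi (b k) * (lam ^+ k * comb dbasis a)));
  last by move=> k _; rewrite mulrA.
rewrite -[X in Tr X]/(comb (fun k => lam ^+ k * comb dbasis a) b) Tr_comb.
by apply: eq_bigr => k _; rewrite Tr_powers_comb_dbasis.
Qed.

Definition Mcan (u : L * L) : 'rV['F_p]_(2 * n) :=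
  \sum_j (coord dbasis u.1 j *: delta_mx 0 (xpos j)
           + coord (powers lam) u.2 j *: delta_mx 0 (ypos j)).

Lemma Mcan_xpos u i : Mcan u 0 (xpos i) = coord dbasis u.1 i.
Proof.
rewrite summxE (bigD1 i) //= big1 => [|j /negbTE ji]; last first.
  rewrite !mxE (inj_eq (@xpos_inj n)) [i == j]eq_sym ji.
  by rewrite (negbTE (xpos_neq_ypos _ _)) andbF !mulr0 addr0.
by rewrite !mxE !eqxx (negbTE (xpos_neq_ypos _ _)) /= mulr1 mulr0 !addr0.
Qed.

Lemma Mcan_ypos u i : Mcan u 0 (ypos i) = coord (powers lam) u.2 i.
Proof.
rewrite summxE (bigD1 i) //= big1 => [|j /negbTE ji]; last first.
  rewrite !mxE (inj_eq (@ypos_inj n)) [i == j]eq_sym ji [ypos i == _]eq_sym.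
  by rewrite (negbTE (xpos_neq_ypos _ _)) andbF !mulr0 addr0.
rewrite !mxE !eqxx eq_sym (negbTE (xpos_neq_ypos _ _)) /=.
by rewrite mulr1 mulr0 add0r addr0.
Qed.

Lemma isM_Mcan : isM f lam Mcan.
Proof.
split=> [c u v | j | j].
- rewrite /Mcan /= (coord_lin comb_dbasis_inj) (coord_lin comb_powers_inj).
  rewrite scaler_sumr -big_split /=; apply: eq_bigr => j _.
  by rewrite !ffunE !scalerDl !scalerDr !scalerA addrACA.
- rewrite /Mcan /= -[_ * _]/(dbasis j) (coord_basis comb_dbasis_inj).
  rewrite (coord0 comb_powers_inj).
  rewrite (bigD1 j) //= big1 => [|i /negbTE ij]; last by rewrite !ffunE ij !scale0r addr0.
  by rewrite !ffunE eqxx scale1r scale0r !addr0.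
- rewrite /Mcan /= -[_ ^+ _]/(powers lam j) (coord_basis comb_powers_inj).
  rewrite (coord0 comb_dbasis_inj).
  rewrite (bigD1 j) //= big1 => [|i /negbTE ij]; last by rewrite !ffunE ij !scale0r addr0.
  by rewrite !ffunE eqxx scale1r scale0r add0r addr0.
Qed.

Lemma Mcan_inj : injective Mcan.
Proof.
move=> u v Muv.
have u1v1 : coord dbasis u.1 = coord dbasis v.1.
  by apply/ffunP => i; rewrite -!Mcan_xpos Muv.
have u2v2 : coord (powers lam) u.2 = coord (powers lam) v.2.
  by apply/ffunP => i; rewrite -!Mcan_ypos Muv.
rewrite [u]surjective_pairing [v]surjective_pairing.
rewrite -(coordK comb_dbasis_inj u.1) -(coordK comb_powers_inj u.2) u1v1 u2v2.
by rewrite (coordK comb_dbasis_inj) (coordK comb_powers_inj).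
Qed.

Lemma Mcan_bij : bijective Mcan.
Proof.
apply: inj_card_bij Mcan_inj _.
by rewrite card_mx card_prod cardL card_ord Fp_cast // -expnD mul1n addnn mul2n.
Qed.

Lemma sympV_Mcan u1 u2 : phi (sympV (Mcan u1) (Mcan u2)) = Tr (sympL u1 u2).
Proof.
rewrite /sympL -(coordK comb_powers_inj u1.2) -(coordK comb_dbasis_inj u2.1).
rewrite -(coordK comb_dbasis_inj u1.1) -(coordK comb_powers_inj u2.2).
rewrite [comb dbasis _ * _]mulrC TrD TrN !Tr_comb_powers_dbasis -sumrB.
rewrite /sympV rmorph_sum; apply: eq_bigr => i _.
by rewrite !Mcan_xpos !Mcan_ypos rmorphB !rmorphM [phi (coord dbasis _ _) * _]mulrC.
Qed.

Lemma sum_scl_ebas_fbas u :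
  u = \sum_j (scl (coord dbasis u.1 j) (ebas f lam j)
               + scl (coord (powers lam) u.2 j) (fbas lam j)).
Proof.
rewrite [u in LHS]surjective_pairing [RHS]surjective_pairing; congr (_, _).
  rewrite -[LHS](coordK comb_dbasis_inj) /comb.
  rewrite (big_morph (fun x : L * L => x.1) (id1 := 0) (op1 := +%R)) //.
  by apply: eq_bigr => j _; rewrite /= mulr0 addr0.
rewrite -[LHS](coordK comb_powers_inj) /comb.
rewrite (big_morph (fun x : L * L => x.2) (id1 := 0) (op1 := +%R)) //.
by apply: eq_bigr => j _; rewrite /= mulr0 add0r.
Qed.

Lemma isM_eq_Mcan M : isM f lam M -> M =1 Mcan.
Proof.
move=> isM_M; have M0 := isM_map0 isM_M; case: isM_M => M_lin M_e M_f.
have scl1 (u : L * L) : scl (1 : 'F_p) u = u.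
  by rewrite /scl rmorph1 !mul1r -surjective_pairing.
have MD : {morph M : u v / u + v} by move=> u v; rewrite -{1}[u]scl1 M_lin scale1r.
have MZ (a : 'F_p) u : M (scl a u) = a *: M u.
  by rewrite -[scl a u]addr0 M_lin M0 addr0.
move=> u; rewrite [in LHS](sum_scl_ebas_fbas u) (big_morph M MD M0).
by apply: eq_bigr => j _; rewrite MD !MZ M_e M_f.
Qed.

Lemma symplectic_trace_isomorphism :
  (exists M, isM f lam M) /\
  forall M, isM f lam M ->
  [/\ bijective M,
      forall u1 u2, phi (sympV (M u1) (M u2)) = Tr (sympL u1 u2) &
      forall u1 u2, sympL u1 u2 = 0 -> sympV (M u1) (M u2) = 0].
Proof.
split=> [|M /isM_eq_Mcan M_Mcan]; first by exists Mcan; exact: isM_Mcan.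
have M_Tr u1 u2 : phi (sympV (M u1) (M u2)) = Tr (sympL u1 u2).
  by rewrite !M_Mcan sympV_Mcan.
split=> // [|u1 u2 u12].
  by apply: (eq_bij (g := M) Mcan_bij) => u; rewrite M_Mcan.
by apply: (fmorph_inj phi) => /=; rewrite M_Tr u12 Tr0 rmorph0.
Qed.

End SymplecticModel.

Section Spread.
Variables (p : nat) (L : finFieldType).
Implicit Types (o : option L) (u v : L * L).

Lemma mem0_Cset o : 0 \in Cset o.
Proof. by case: o => [a|]; apply/imsetP; exists 0; rewrite ?mul0r. Qed.

Lemma scl_addr_Cset o (c : 'F_p) u v :
  u \in Cset o -> v \in Cset o -> scl c u + v \in Cset o.
Proof.
case: o => [a|] /imsetP[b _ ->] /imsetP[b' _ ->]; apply/imsetP.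
  exists (fp2L L c * b + b') => //.
  by apply: injective_projections; rewrite //= mulrDl mulrA.
exists (fp2L L c * b + b') => //.
by apply: injective_projections; rewrite //= mulr0 add0r.
Qed.

Lemma card_Cset o : #|Cset o| = #|L|.
Proof. by case: o => [a|]; rewrite card_imset // => b b' []. Qed.

Lemma sympL_Cset o u v : u \in Cset o -> v \in Cset o -> sympL u v = 0.
Proof.
case: o => [a|] /imsetP[b _ ->] /imsetP[b' _ ->]; rewrite /sympL /=.
  by rewrite mulrAC -mulrA subrr.
by rewrite mulr0 mul0r subrr.
Qed.

Lemma Cset_inter o o' : o != o' -> Cset o :&: Cset o' = [set (0 : L * L)].
Proof.
move=> oo'; apply/setP => u; rewrite inE in_set1; apply/andP/eqP; last first.
  by move=> ->; rewrite !mem0_Cset.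
case: o o' oo' => [a|] [a'|] //= aa' [/imsetP[b _ ->] /imsetP[b' _]].
- case=> <- /eqP; rewrite -subr_eq0 -mulrBr mulf_eq0 => /orP[/eqP-> | ].
    by rewrite mul0r.
  by rewrite subr_eq0 => /eqP a_a'; rewrite a_a' eqxx in aa'.
- by case=> -> _; rewrite mul0r.
- by case=> <- ->; rewrite mul0r.
Qed.

Variables (m : nat) (M : L * L -> 'rV['F_p]_m).
Hypotheses (M_inj : injective M) (M0 : M 0 = 0).

Lemma card_imset_Cset o : #|M @: Cset o| = #|L|.
Proof. by rewrite card_imset // card_Cset. Qed.

Lemma imset_Cset_inter o o' : o != o' -> M @: Cset o :&: M @: Cset o' = [set 0].
Proof.
by move=> oo'; rewrite -imsetI ?Cset_inter // ?imset_set1 ?M0 // => u v _ _ /M_inj.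
Qed.

Lemma imset_Cset_inj : injective (fun o => M @: Cset o).
Proof.
move=> o o' /= Coo'; case: (eqVneq o o') => // /imset_Cset_inter.
rewrite Coo' setIid => C_o'.
have := card_imset_Cset o'; rewrite C_o' cards1 => L1.
by have := card_finNzRing_gt1 L; rewrite -L1.
Qed.

Lemma scl_addr_imset_Cset o (c : 'F_p) w w' :
  (forall c u v, M (scl c u + v) = c *: M u + M v) ->
  w \in M @: Cset o -> w' \in M @: Cset o -> c *: w + w' \in M @: Cset o.
Proof.
move=> M_lin /imsetP[u u_o ->] /imsetP[v v_o ->]; rewrite -M_lin.
by apply: imset_f; exact: scl_addr_Cset.
Qed.

End Spread.

Theorem mainTheorem13 (p n : nat) (L : finFieldType) (f : {poly 'F_p}) (lam : L) :
  prime p -> (0 < n)%N ->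
  p \in [pchar L] -> #|L| = (p ^ n)%N ->
  f \is monic -> size f = n.+1 -> irreducible_poly f ->
  (exists s : seq L, [/\ uniq s, size s = n & fL L f = \prod_(r <- s) ('X - r%:P)]) ->
  root (fL L f) lam ->
  (exists M : L * L -> 'rV['F_p]_(2 * n), isM f lam M) /\
  forall M : L * L -> 'rV['F_p]_(2 * n), isM f lam M ->
  [/\ bijective M,
      (forall u1 u2 : L * L, fp2L L (sympV (M u1) (M u2)) = Tr n f lam (sympL u1 u2)),
      injective (fun o : option L => M @: Cset o),
      (forall o : option L,
         [/\ #|M @: Cset o| = (p ^ n)%N,
             0 \in M @: Cset o,
             (forall (a : 'F_p) (w w' : 'rV['F_p]_(2 * n)),
                 w \in M @: Cset o -> w' \in M @: Cset o -> a *: w + w' \in M @: Cset o),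
             (forall w w', w \in M @: Cset o -> w' \in M @: Cset o -> sympV w w' = 0) &
             (forall w w', w \in M @: Cset o -> w' \in M @: Cset o ->
                 tensS w *m tensS w' = tensS w' *m tensS w)]) &
      (forall o o' : option L, o != o' -> (M @: Cset o) :&: (M @: Cset o') = [set 0])].
Proof.
(* [f \is monic] follows from the factorization of [fL L f]. *)
move=> p_pr _ pcharL cardL _ size_f f_irr [s [s_uniq size_s fL_roots]] f_lam.
have [exM isM_spec] := symplectic_trace_isomorphism p_pr pcharL cardL size_f f_irr
  s_uniq size_s fL_roots f_lam.
split=> // M isM_M; have [M_bij M_Tr M_symp0] := isM_spec M isM_M.
have M_inj := bij_inj M_bij; have M0 := isM_map0 isM_M.
have symp0 o w w' : w \in M @: Cset o -> w' \in M @: Cset o -> sympV w w' = 0.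
  move=> /imsetP[u u_o ->] /imsetP[v v_o ->]; apply: M_symp0.
  exact: sympL_Cset u_o v_o.
split=> //; first exact: imset_Cset_inj.
  move=> o; split=> [||c w w'||w w' w_o w'_o].
  - by rewrite card_imset_Cset.
  - by rewrite -M0 imset_f ?mem0_Cset.
  - by case: isM_M => M_lin _ _; exact: scl_addr_imset_Cset.
  - exact: symp0.
  - by apply: (tensS_commute p_pr); exact: symp0 w_o w'_o.
exact: imset_Cset_inter.
Qed.
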